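(* Let $A,B\in\mathbb{C}^{m\times n}$. The following are equivalent: (a) $A\le^{\diamond}B$; (b) $\mathcal{R}(B^* )=\mathcal{R}(A^* )\oplus\mathcal{R}(B^\dagger-A^\dagger)$ (direct sum); (c) $\mathcal{R}(A^* )\cap\mathcal{R}(B^\dagger-A^\dagger)=\{0\}$ and $\mathcal{R}(A^* )\subseteq\mathcal{R}(B^* )$.
   Context: For a matrix $M$, $M^*$ is its conjugate transpose, $M^\dagger$ its Moore–Penrose inverse, $\mathcal{R}(M)$ its column space. Diamond partial order: for $A,B\in\mathbb{C}^{m\times n}$, $A\le^{\diamond}B$ means $\mathcal{R}(A)\subseteq\mathcal{R}(B)$, $\mathcal{R}(A^* )\subseteq\mathcal{R}(B^* )$, and $AB^*A=AA^*A$. *)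

From HB Require Import structures.
From mathcomp Require Import all_boot all_order all_algebra.
From mathcomp Require Import complex.
From mathcomp Require Import reals.
Set Implicit Arguments. Unset Strict Implicit. Unset Printing Implicit Defensive.
Import Order.TTheory GRing.Theory Num.Theory.
Local Open Scope ring_scope.

Section Defs.
Variable C : numClosedFieldType.

Definition ctr m n (M : 'M[C]_(m, n)) : 'M[C]_(n, m) := (map_mx Num.conj M)^T.

(* Moore--Penrose inverse: X is the M-P inverse of M iff the four Penrose
   equations hold (X is then unique). *)
Definition is_MPinv m n (M : 'M[C]_(m, n)) (X : 'M[C]_(n, m)) : Prop :=
  [/\ M *m X *m M = M, X *m M *m X = X,
      ctr (M *m X) = M *m X & ctr (X *m M) = X *m M].

(* column space R(M) of M : 'M_(m,n), represented (as mathcomp does for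
   subspaces) by a matrix whose row space is R(M) in 'rV_m *)
Definition colspace m n (M : 'M[C]_(m, n)) : 'M[C]_(n, m) := M^T.

Definition diamond_le m n (A B : 'M[C]_(m, n)) : Prop :=
  [/\ (colspace A <= colspace B)%MS,
      (colspace (ctr A) <= colspace (ctr B))%MS &
      A *m ctr B *m A = A *m ctr A *m A].
End Defs.

From HB Require Import structures.
From mathcomp Require Import all_boot all_order all_algebra.
From mathcomp Require Import complex.
From mathcomp Require Import reals.
Import Order.TTheory GRing.Theory Num.Theory.
Local Open Scope ring_scope.

(* A^* and A^+ have the same range, and so do their conjugate transposes;
   hence everything is a statement about X := A^+ inside Y := B^+.  For an
   inner inverse G of Y (here G := B) and R(X) <= R(Y), the ranges of X and
   Y - X meet trivially iff X G X = X and X^* has its range inside that of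
   Y^*.  Moreover A B^* A = A A^* A and A^+ B A^+ = A^+ both say exactly that
   A = A A^+ B A^+ A.  Finally (b) is a rephrasing of (c), because B^+ - A^+
   and B^+ lie in each other's span modulo A^+. *)

Section ColumnSpaces.
Context {F : fieldType}.

Lemma mulmx_colcap0 {n m p q} {X : 'M[F]_(n, m)} {Z : 'M[F]_(n, q)}
    {P : 'M[F]_(m, p)} (Q : 'M[F]_(q, p)) :
  (X^T :&: Z^T <= (0 : 'M_n))%MS -> X *m P = Z *m Q -> X *m P = 0.
Proof.
move=> cap0 XPZQ; apply: trmx_inj; rewrite trmx0; apply/eqP.
rewrite -submx0; apply: submx_trans cap0.
by rewrite sub_capmx {2}XPZQ !trmx_mul !submxMl.
Qed.

Lemma mxdirect_adds_eqmxP {n m1 m2 m3} {U : 'M[F]_(m1, n)} {V : 'M[F]_(m2, n)}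
    {W : 'M[F]_(m3, n)} :
  (V <= U + W)%MS -> (W <= U + V)%MS ->
  ((U + V == W)%MS /\ mxdirect (U + V)) <->
  ((U :&: V == (0 : 'M_n))%MS /\ (U <= W)%MS).
Proof.
move=> sVUW sWUV; split.
- case=> /andP[sUVW _] /mxdirect_addsP/eqmx0P cap0; split=> //.
  exact: submx_trans (addsmxSl U V) sUVW.
- case=> /eqmx0P cap0 sUW; split; last exact/mxdirect_addsP.
  rewrite sWUV andbT addsmx_sub sUW /=.
  by apply: submx_trans sVUW _; rewrite addsmx_sub sUW submx_refl.
Qed.

Lemma mulmx_ginv_sandwich m n (P : 'M[F]_(m, n)) (Q M : 'M[F]_(n, m)) :
  P *m Q *m P = P -> P *m (Q *m P *m M *m P *m Q) *m P = P *m M *m P.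
Proof.
move=> PQP; have PQP' : P *m (Q *m P) = P by rewrite mulmxA PQP.
by rewrite !mulmxA PQP -!mulmxA PQP'.
Qed.

Lemma colcap_subr_eq0 m n (Y X : 'M[F]_(n, m)) (G : 'M[F]_(m, n)) :
  Y *m G *m Y = Y -> (X^T <= Y^T)%MS ->
  (X^T :&: (Y - X)^T <= (0 : 'M_n))%MS <-> X *m G *m X = X /\ (X <= Y)%MS.
Proof.
move=> YGY /submxP[K XKY].
have YGX : Y *m G *m X = X.
  by rewrite -[X]trmxK XKY trmx_mul trmxK mulmxA YGY.
have [Z eZ] : exists Z : 'M[F]_(n, m), Y - X = Z by exists (Y - X).
rewrite eZ; have YXZ : Y = X + Z by rewrite -eZ addrC subrK.
have ZGX : Z *m G *m X = X - X *m G *m X by rewrite -eZ !mulmxBl YGX.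
split=> [cap0 | [XGX /submxP[L XLY]]].
- have XGX : X *m G *m X = X.
    have : X *m (G *m X - 1%:M) = 0.
      apply: (mulmx_colcap0 (- (G *m X)) cap0).
      by rewrite mulmxN mulmxA ZGX opprB mulmxBr mulmx1 mulmxA.
    by rewrite mulmxBr mulmx1 mulmxA => /eqP; rewrite subr_eq0 => /eqP.
  have XGZ : X *m G *m Z = 0.
    have XGZ_ZGZ : X *m G *m Z + Z *m G *m Z = Z.
      move: YGY; rewrite YXZ !mulmxDl !mulmxDr XGX ZGX XGX subrr add0r.
      by rewrite -addrA => /addrI.
    rewrite -mulmxA; apply: (mulmx_colcap0 (1%:M - G *m Z) cap0); apply/eqP.
    by rewrite mulmxBr mulmx1 !mulmxA eq_sym subr_eq XGZ_ZGZ.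
  split=> //; apply/submxP; exists (X *m G).
  by rewrite YXZ mulmxDr XGX XGZ addr0.
- have XGZ : X *m G *m Z = 0.
    by rewrite -eZ mulmxBr XGX {1}XLY -!mulmxA (mulmxA Y) YGY -XLY subrr.
  apply/rV_subP=> v.
  rewrite sub_capmx => /andP[/submxP[a ->] /submxP[b vZ]].
  have : X *m G *m (a *m X^T)^T = (a *m X^T)^T.
    by rewrite trmx_mul trmxK mulmxA XGX.
  rewrite {1}vZ trmx_mul trmxK mulmxA XGZ mul0mx => /(congr1 trmx).
  by rewrite trmx0 trmxK => <-; rewrite sub0mx.
Qed.

End ColumnSpaces.

Section ConjugateTranspose.
Context {C : numClosedFieldType}.

Lemma ctrM {m n p} (M : 'M[C]_(m, n)) (N : 'M[C]_(n, p)) :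
  ctr (M *m N) = ctr N *m ctr M.
Proof. by rewrite /ctr map_mxM trmx_mul. Qed.

Lemma ctrK {m n} (M : 'M[C]_(m, n)) : ctr (ctr M) = M.
Proof.
rewrite /ctr map_trmx trmxK -map_mx_comp map_mx_id // => x /=.
by rewrite conjCK.
Qed.

Lemma ctr_submx m n1 n2 (M : 'M[C]_(m, n1)) (N : 'M[C]_(m, n2)) :
  (ctr M <= ctr N)%MS = (M^T <= N^T)%MS.
Proof. by rewrite /ctr !map_trmx map_submx. Qed.

Section MoorePenrose.
Context {m n : nat} {A : 'M[C]_(m, n)} {Ad : 'M[C]_(n, m)}.
Hypothesis hA : is_MPinv A Ad.

Lemma MPinv_col_eqmx : (Ad^T :=: (ctr A)^T)%MS.
Proof.
case: hA => AAdA AdAAd _ AdA_herm; apply/eqmxP/andP; split.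
- have -> : Ad = ctr A *m (ctr Ad *m Ad) by rewrite mulmxA -ctrM AdA_herm AdAAd.
  by rewrite trmx_mul submxMl.
- have -> : ctr A = Ad *m (A *m ctr A).
    by rewrite mulmxA -AdA_herm -ctrM mulmxA AAdA.
  by rewrite trmx_mul submxMl.
Qed.

Lemma MPinv_row_eqmx : (Ad :=: ctr A)%MS.
Proof.
case: hA => AAdA AdAAd AAd_herm _; apply/eqmxP/andP; split.
- have -> : Ad = Ad *m ctr Ad *m ctr A.
    by rewrite -mulmxA -ctrM AAd_herm mulmxA AdAAd.
  exact: submxMl.
- have -> : ctr A = ctr A *m A *m Ad by rewrite -mulmxA -AAd_herm -ctrM AAdA.
  exact: submxMl.
Qed.

Lemma MPinv_inner_eq (B : 'M[C]_(m, n)) :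
  Ad *m B *m Ad = Ad <-> A = A *m Ad *m B *m Ad *m A.
Proof.
case: hA => AAdA AdAAd _ _; split=> [AdBAd | sandwichA].
- have -> : A *m Ad *m B *m Ad *m A = A *m (Ad *m B *m Ad) *m A.
    by rewrite !mulmxA.
  by rewrite AdBAd AAdA.
- by rewrite -[RHS]AdAAd sandwichA mulmx_ginv_sandwich.
Qed.

Lemma MPinv_diamond_eq (B : 'M[C]_(m, n)) :
  A *m ctr B *m A = A *m ctr A *m A <-> A = A *m Ad *m B *m Ad *m A.
Proof.
case: hA => AAdA _ AAd_herm AdA_herm.
have ctr_sandwich : ctr (A *m Ad *m B *m Ad *m A) = Ad *m A *m ctr B *m A *m Ad.
  have -> : A *m Ad *m B *m Ad *m A = A *m Ad *m B *m (Ad *m A).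
    by rewrite !mulmxA.
  by rewrite ctrM (ctrM (A *m Ad)) AAd_herm AdA_herm !mulmxA.
have ctrA_sandwich : Ad *m A *m ctr A *m A *m Ad = ctr A.
  by rewrite -AdA_herm -ctrM mulmxA AAdA -mulmxA -AAd_herm -ctrM AAdA.
split=> [diamondA | sandwichA].
- apply: (can_inj ctrK); rewrite ctr_sandwich -[LHS]ctrA_sandwich.
  move/(congr1 (fun M => Ad *m M *m Ad)): diamondA.
  by rewrite !mulmxA => ->.
- have := congr1 (@ctr C m n) sandwichA; rewrite ctr_sandwich => ->.
  by rewrite mulmx_ginv_sandwich.
Qed.

End MoorePenrose.

Section DiamondOrder.
Context {m n : nat} {A B : 'M[C]_(m, n)} {Ad Bd : 'M[C]_(n, m)}.
Hypotheses (hA : is_MPinv A Ad) (hB : is_MPinv B Bd).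

Lemma MPinv_mxdirect_subrP :
  ((colspace (ctr A) + colspace (Bd - Ad) == colspace (ctr B))%MS
     /\ mxdirect (colspace (ctr A) + colspace (Bd - Ad))) <->
  ((colspace (ctr A) :&: colspace (Bd - Ad) == (0 : 'M_n))%MS
     /\ (colspace (ctr A) <= colspace (ctr B))%MS).
Proof.
have colA := MPinv_col_eqmx hA; have colB := MPinv_col_eqmx hB.
have sAdA : (Ad^T <= (ctr A)^T)%MS by rewrite colA.
have sBdB : (Bd^T <= (ctr B)^T)%MS by rewrite colB.
rewrite /colspace; apply: mxdirect_adds_eqmxP.
- rewrite linearB /=; apply: addmx_sub; rewrite ?eqmx_opp.
  + exact: submx_trans sBdB (addsmxSr _ _).
  + exact: submx_trans sAdA (addsmxSl _ _).
- rewrite -colB -{1}[Bd](subrK Ad) addrC linearD.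
  exact: addmx_sub_adds.
Qed.

Lemma diamond_le_MPinvP :
  diamond_le A B <->
  ((colspace (ctr A) :&: colspace (Bd - Ad) == (0 : 'M_n))%MS
     /\ (colspace (ctr A) <= colspace (ctr B))%MS).
Proof.
have colA := MPinv_col_eqmx hA; have colB := MPinv_col_eqmx hB.
have rowAB : (A^T <= B^T)%MS = (Ad <= Bd)%MS.
  by rewrite (MPinv_row_eqmx hA) (MPinv_row_eqmx hB) ctr_submx.
have core : ((ctr A)^T <= (ctr B)^T)%MS ->
    ((ctr A)^T :&: (Bd - Ad)^T == (0 : 'M_n))%MS <->
    Ad *m B *m Ad = Ad /\ (Ad <= Bd)%MS.
  move=> sAB; rewrite !sub0mx !andbT -(cap_eqmx colA (eqmx_refl _)).
  by apply: colcap_subr_eq0; [case: hB | rewrite colA colB].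
rewrite /diamond_le /colspace.
split=> [[sAB sAB' diamond] | [cap0 sAB']].
- split=> //; apply/(core sAB'); rewrite -rowAB; split=> //.
  exact/(MPinv_inner_eq hA)/(MPinv_diamond_eq hA).
- have [inner sAdBd] := (core sAB').1 cap0.
  split=> //; first by rewrite rowAB.
  exact/(MPinv_diamond_eq hA)/(MPinv_inner_eq hA).
Qed.

End DiamondOrder.
End ConjugateTranspose.

Local Open Scope complex_scope.

Theorem theorem3p2 (R : realType) (m n : nat) (A B : 'M[R[i]]_(m, n))
    (Ad Bd : 'M[R[i]]_(n, m)) (hA : is_MPinv A Ad) (hB : is_MPinv B Bd) :
  let D := Bd - Ad in
  [/\ diamond_le A B <->
        ((colspace (ctr A) + colspace D == colspace (ctr B))%MS
         /\ mxdirect (colspace (ctr A) + colspace D)),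
      diamond_le A B <->
        ((colspace (ctr A) :&: colspace D == (0 : 'M_n))%MS
         /\ (colspace (ctr A) <= colspace (ctr B))%MS) &
      ((colspace (ctr A) + colspace D == colspace (ctr B))%MS
         /\ mxdirect (colspace (ctr A) + colspace D)) <->
        ((colspace (ctr A) :&: colspace D == (0 : 'M_n))%MS
         /\ (colspace (ctr A) <= colspace (ctr B))%MS)].
Proof.
have a_c := diamond_le_MPinvP hA hB.
have b_c := MPinv_mxdirect_subrP hA hB.
by split; [exact: iff_trans a_c (iff_sym b_c) | exact: a_c | exact: b_c].
Qed.
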